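(* Let $f,g$ be complex-valued functions of two variables with $f\perp g$, let $\{a_i\}_{i\ge0},\{b_i\}_{i\ge0}$ be sequences, $x$ a complex number, and $m\ge 0$ an integer, such that $f(a_0,b_0)\ne0$ and $g(b_j,b_0)\neq0$, $f(a_j,x)\ne0$ for $1\le j\le m$. Then $$\sum_{k=0}^{m}\frac{f(a_k,b_k)}{f(a_0,b_0)}\frac{\prod_{j=0}^{k-1}f(a_j,b_0)}{\prod_{j=1}^{k}g(b_j,b_0)}\frac{\prod_{j=0}^{k-1}g(b_j,x)}{\prod_{j=1}^{k}f(a_j,x)}=\frac{\prod_{j=1}^{m}f(a_j,b_0)}{\prod_{j=1}^{m}g(b_j,b_0)}\frac{\prod_{j=1}^{m}g(b_j,x)}{\prod_{j=1}^{m}f(a_j,x)}.$$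
   Context: $f\perp g$ means $g(u,v)f(z,w)-g(u,w)f(z,v)+g(v,w)f(z,u)=0$ for all $u,v,w,z$. Empty products equal $1$. *)

From mathcomp Require Import all_boot all_order all_algebra.
From mathcomp Require Import complex reals.
Set Implicit Arguments. Unset Strict Implicit. Unset Printing Implicit Defensive.
Import GRing.Theory Num.Theory.
Local Open Scope ring_scope.

Definition perp (R : realType) (f g : R[i] -> R[i] -> R[i]) : Prop :=
  forall u v w z : R[i],
    g u v * f z w - g u w * f z v + g v w * f z u = 0.

From mathcomp Require Import all_boot all_order all_algebra.
From mathcomp Require Import complex reals.
From mathcomp Require Import ring.
Local Open Scope ring_scope.
Import GRing.Theory.

(* Instantiating [perp f g] at (u, v, w, z) = (b_k, b_0, x, a_k) gives
   f(a_k,b_k) g(b_0,x) = f(a_k,b_0) g(b_k,x) - g(b_k,b_0) f(a_k,x).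
   This makes the k-th summand the difference P_k - P_(k-1) of the partial
   products P_k of f(a_j,b_0) g(b_j,x) / (g(b_j,b_0) f(a_j,x)) over 1 <= j <= k,
   so the sum telescopes to P_m. *)

Lemma perp_cross {R : realType} {f g : R[i] -> R[i] -> R[i]} (u v w z : R[i]) :
  perp f g -> g v w * f z u = g u w * f z v - g u v * f z w.
Proof. by move=> /(_ u v w z) fg0; rewrite -[LHS]subr0 -fg0; ring. Qed.

Section Telescoping.

Variables (F : fieldType) (α β γ δ c : nat -> F).

Definition ratio_prod k := \prod_(1 <= j < k) (α j * γ j / (β j * δ j)).

Definition summand k :=
  c k / α 0%N
  * ((\prod_(0 <= j < k) α j) / (\prod_(1 <= j < k.+1) β j))
  * ((\prod_(0 <= j < k) γ j) / (\prod_(1 <= j < k.+1) δ j)).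

Lemma ratio_prodE k :
  ratio_prod k = (\prod_(1 <= j < k) α j / \prod_(1 <= j < k) β j)
                 * (\prod_(1 <= j < k) γ j / \prod_(1 <= j < k) δ j).
Proof.
rewrite /ratio_prod -!prodfV -!big_split /=.
by apply: eq_bigr => j _; rewrite invfM; ring.
Qed.

Lemma prod_nat_neq0 (h : nat -> F) m n :
  (forall j, (m <= j < n)%N -> h j != 0) -> \prod_(m <= j < n) h j != 0.
Proof.
move=> hn0; rewrite big_nat prodf_seq_neq0.
by apply/allP => j _; apply/implyP; apply: hn0.
Qed.

Lemma summand0 : α 0%N != 0 -> c 0%N = α 0%N -> summand 0 = 1.
Proof. by move=> α0 c0; rewrite /summand c0 !big_geq // !divr1 !mulr1 divff. Qed.

Lemma summand_telescope k :
  (0 < k)%N -> α 0%N != 0 ->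
  (forall j, (1 <= j <= k)%N -> β j != 0) ->
  (forall j, (1 <= j <= k)%N -> δ j != 0) ->
  c k * γ 0%N = α k * γ k - β k * δ k ->
  summand k = ratio_prod k.+1 - ratio_prod k.
Proof.
move=> k_gt0 α0 βn0 δn0 ck.
have βk : β k != 0 by apply: βn0; rewrite k_gt0 leqnn.
have δk : δ k != 0 by apply: δn0; rewrite k_gt0 leqnn.
have βprod : \prod_(1 <= j < k) β j != 0.
  by apply: prod_nat_neq0 => j /andP[j_ge1 j_lt]; rewrite βn0 // j_ge1 ltnW.
have δprod : \prod_(1 <= j < k) δ j != 0.
  by apply: prod_nat_neq0 => j /andP[j_ge1 j_lt]; rewrite δn0 // j_ge1 ltnW.
rewrite /summand !ratio_prodE !(big_ltn k_gt0) !(big_nat_recr k 1) //=.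
move: ck; set A := \prod_(1 <= j < k) α j; set B := \prod_(1 <= j < k) β j.
set G := \prod_(1 <= j < k) γ j; set D := \prod_(1 <= j < k) δ j => ck.
have -> : c k / α 0%N * (α 0%N * A / (B * β k)) * (γ 0%N * G / (D * δ k))
          = c k * γ 0%N * (A / (B * β k)) * (G / (D * δ k)).
  by field; rewrite α0 βk δk βprod δprod.
by rewrite ck; field; rewrite βk δk βprod δprod.
Qed.

Lemma sum_summand m :
  α 0%N != 0 -> c 0%N = α 0%N ->
  (forall j, (1 <= j <= m)%N -> β j != 0) ->
  (forall j, (1 <= j <= m)%N -> δ j != 0) ->
  (forall k, (1 <= k <= m)%N -> c k * γ 0%N = α k * γ k - β k * δ k) ->
  \sum_(0 <= k < m.+1) summand k = ratio_prod m.+1.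
Proof.
move=> α0 c0 βn0 δn0 ck; rewrite big_ltn // summand0 //.
rewrite (telescope_sumr_eq ratio_prod) // => [|k /andP[k_gt0 k_le]].
  have -> : ratio_prod 1 = 1 by rewrite /ratio_prod big_geq.
  by rewrite addrC subrK.
apply: summand_telescope => // [j|j|]; last by rewrite ck // k_gt0.
  by move=> /andP[j_ge1 j_le]; rewrite βn0 // j_ge1 (leq_trans j_le).
by move=> /andP[j_ge1 j_le]; rewrite δn0 // j_ge1 (leq_trans j_le).
Qed.

End Telescoping.

Theorem corollary3p1 (R : realType) (f g : R[i] -> R[i] -> R[i])
    (a b : nat -> R[i]) (x : R[i]) (m : nat) :
  perp f g ->
  f (a 0%N) (b 0%N) != 0 ->
  (forall j, (1 <= j <= m)%N -> g (b j) (b 0%N) != 0) ->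
  (forall j, (1 <= j <= m)%N -> f (a j) x != 0) ->
  \sum_(0 <= k < m.+1)
     (f (a k) (b k) / f (a 0%N) (b 0%N))
     * ((\prod_(0 <= j < k) f (a j) (b 0%N)) / (\prod_(1 <= j < k.+1) g (b j) (b 0%N)))
     * ((\prod_(0 <= j < k) g (b j) x) / (\prod_(1 <= j < k.+1) f (a j) x))
  = ((\prod_(1 <= j < m.+1) f (a j) (b 0%N)) / (\prod_(1 <= j < m.+1) g (b j) (b 0%N)))
    * ((\prod_(1 <= j < m.+1) g (b j) x) / (\prod_(1 <= j < m.+1) f (a j) x)).
Proof.
move=> fg f00 gn0 fn0.
have cross k : f (a k) (b k) * g (b 0%N) x
               = f (a k) (b 0%N) * g (b k) x - g (b k) (b 0%N) * f (a k) x.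
  by rewrite [LHS]mulrC (perp_cross (b k) (b 0%N) x (a k) fg) [g (b k) x * _]mulrC.
have := @sum_summand _ (fun j => f (a j) (b 0%N)) (fun j => g (b j) (b 0%N))
  (fun j => g (b j) x) (fun j => f (a j) x) (fun k => f (a k) (b k)) m
  f00 erefl gn0 fn0 (fun k _ => cross k).
rewrite /summand ratio_prodE; exact.
Qed.
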